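(* Let $n$ and $0<\delta\le1$ be such that $\delta n/2$ and $n/2$ are integers, let $W=\{w_1,\dots,w_n\}$, $M=\{m_1,\dots,m_n\}$, and let $\bar x=(x^i_j)$, $\bar y=(y^i_j)$, $1\le i,j\le\delta n/2$, be bit arrays with $\mathrm{DISJ}(\bar x,\bar y)=1$. Then the marriage market with the preferences $P(\bar x,\bar y)$ described in the context has a unique stable marriage, namely $\mu_1=\{(m_i,w_{i+n/2}) : 1\le i\le n/2\}\cup\{(m_{i+n/2},w_i): 1\le i\le n/2\}$.
   Context: Participants are split into high ($w_1,\dots,w_{\delta n/2}$; $m_1,\dots,m_{\delta n/2}$), mid (indices $\delta n/2+1,\dots,n/2$) and low (indices $n/2+1,\dots,n$). Preferences $P(\bar x,\bar y)$: each low woman ranks $m_1\succ m_2\succ\dots\succ m_n$ and each low man ranks $w_1\succ\dots\succ w_n$. Each mid woman ranks $m_{n/2+1}\succ\dots\succ m_n\succ m_1\succ\dots\succ m_{n/2}$ (low, then high, then mid, each in index order), and mid men symmetrically over women. A high woman $w_i$ ranks, in order: the high men $m_j$ with $x^i_j=1$; then all low men; then all mid men; then the high men $m_j$ with $x^i_j=0$; within each group by increasing index. A high man $m_j$ ranks: high women $w_i$ with $y^i_j=1$; all low women; all mid women; high women $w_i$ with $y^i_j=0$; within each group by increasing index. All lists are full. A perfect marriage is stable if there is no pair $(w,m)$ each preferring the other to their spouse. $\mathrm{DISJ}(\bar x,\bar y)=1$ iff there is no $(i,j)$ with $x^i_j=y^i_j=1$. *)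

From mathcomp Require Import all_boot.
Set Implicit Arguments. Unset Strict Implicit. Unset Printing Implicit Defensive.

(* Conventions (0-based): n = h + h participants on each side, h = n/2,
   k = delta*n/2.  Woman w_{i+1} is index i : 'I_n, man m_{j+1} is index j.
   high: index < k ; mid: k <= index < h ; low: h <= index < n. *)

(* Bit arrays x, y : 'I_k -> 'I_k -> bool; x i j = x^{i+1}_{j+1}
   (first index = woman, second index = man). Read on nat, false out of range. *)
Definition bitat (k : nat) (x : 'I_k -> 'I_k -> bool) (i j : nat) : bool :=
  match @insub _ (fun t => t < k) _ i, @insub _ (fun t => t < k) _ j with
  | Some a, Some b => x a b
  | _, _ => false
  end.

Definition DISJ (k : nat) (x y : 'I_k -> 'I_k -> bool) : bool :=
  [forall i : 'I_k, forall j : 'I_k, ~~ (x i j && y i j)].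

(* Group rank (smaller = preferred) of man j in the list of woman i. *)
Definition wgroup (k h : nat) (x : 'I_k -> 'I_k -> bool) (i j : nat) : nat :=
  if h <= i then 0                                  (* low woman: m_1 > ... > m_n *)
  else if k <= i then
    (if h <= j then 0 else if j < k then 1 else 2)  (* low, high, mid *)
  else
    (if j < k then (if bitat x i j then 0 else 3)
     else if h <= j then 1 else 2).

(* Group rank of woman i in the list of man j (y^i_j: i woman, j man). *)
Definition mgroup (k h : nat) (y : 'I_k -> 'I_k -> bool) (j i : nat) : nat :=
  if h <= j then 0
  else if k <= j then
    (if h <= i then 0 else if i < k then 1 else 2)
  else
    (if i < k then (if bitat y i j then 0 else 3)
     else if h <= i then 1 else 2).

(* Position key: lexicographic (group, index); indices are < h + h. *)
Definition wkey (k h : nat) (x : 'I_k -> 'I_k -> bool) (i j : nat) : nat := @wgroup k h x i j * (h + h) + j.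
Definition mkey (k h : nat) (y : 'I_k -> 'I_k -> bool) (j i : nat) : nat := @mgroup k h y j i * (h + h) + i.

Definition wprefers (k h : nat) (x : 'I_k -> 'I_k -> bool) (i : 'I_(h + h)) (m m' : 'I_(h + h)) : bool :=
  @wkey k h x i m < @wkey k h x i m'.
Definition mprefers (k h : nat) (y : 'I_k -> 'I_k -> bool) (j : 'I_(h + h)) (w w' : 'I_(h + h)) : bool :=
  @mkey k h y j w < @mkey k h y j w'.

(* A perfect marriage is an injective (hence bijective) map mu : women -> men;
   mu w is the husband of w. *)
Definition stable (k h : nat) (x y : 'I_k -> 'I_k -> bool) (mu : 'I_(h + h) -> 'I_(h + h)) : Prop :=
  forall w w' : 'I_(h + h),
    ~ (@wprefers k h x w (mu w') (mu w) && @mprefers k h y (mu w') w w').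

Definition mu1 (h : nat) (w : 'I_(h + h)) : nat :=
  if w < h then w + h else w - h.

From mathcomp Require Import all_boot zify.
Set Implicit Arguments. Unset Strict Implicit. Unset Printing Implicit Defensive.

(* Every participant ranks the opposite half of the market (low versus high and
   mid) by index.  Hence mu_1 can only be blocked by a high woman and a high man
   who put each other first, which DISJ excludes.  Conversely, let mu be stable.
   If a low woman had a low husband then, by counting, some upper woman would
   have an upper husband, and one of the two crossed pairs would block (again by
   DISJ); so mu matches each half with the other.  Now if w is the first woman
   not married to her mu_1 partner m, the wife of m comes after w in w's half and
   the husband of w comes after m in m's half, so (w, m) blocks. *)

Lemma ltn_lex_key g g' a b N : a < N -> b < N ->
  (g * N + a < g' * N + b) = (g < g') || (g == g') && (a < b).
Proof.
move=> aN bN; case: (ltngtP g g') => [lt|gt|<-] /=; last by rewrite ltn_add2l.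
- have : g.+1 * N <= g' * N by rewrite leq_mul2r lt orbT.
  rewrite mulSn; lia.
- have : g'.+1 * N <= g * N by rewrite leq_mul2r gt orbT.
  rewrite mulSn; lia.
Qed.

Lemma bitat_transpose k (y : 'I_k -> 'I_k -> bool) i j :
  bitat (fun a b => y b a) j i = bitat y i j.
Proof. by rewrite /bitat; case: (insub i : option 'I_k); case: (insub j : option 'I_k). Qed.

Lemma bitat_disj k (x y : 'I_k -> 'I_k -> bool) i j :
  DISJ x y -> bitat x i j && bitat y i j = false.
Proof.
move=> /forallP disj; rewrite /bitat.
case: (insub i : option 'I_k) => [a|] //; case: (insub j : option 'I_k) => [b|] //.
by apply/negbTE; move/forallP: (disj a).
Qed.

(* Men's preferences are women's preferences for the transposed array, so the
   preference lemmas below are stated for women only. *)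
Lemma mprefers_transpose k h (y : 'I_k -> 'I_k -> bool) m (w w' : 'I_(h + h)) :
  mprefers y m w w' = wprefers (fun a b => y b a) m w w'.
Proof. by rewrite /mprefers /wprefers /mkey /wkey /wgroup /mgroup !(bitat_transpose y). Qed.

Section WomanPreferences.
Variables (k h : nat) (x : 'I_k -> 'I_k -> bool).
Hypothesis hk : k <= h.
Implicit Types w a b : 'I_(h + h).

Lemma wprefersE w a b : wprefers x w a b =
  (wgroup h x w a < wgroup h x w b) || (wgroup h x w a == wgroup h x w b) && (a < b).
Proof. by rewrite /wprefers /wkey ltn_lex_key. Qed.

Lemma wprefers_asym w a b : a != b -> wprefers x w a b = ~~ wprefers x w b a.
Proof.
move=> neq; rewrite !wprefersE; case: ltngtP => //= _.
by case: ltngtP => // /val_inj eq_ab; rewrite eq_ab eqxx in neq.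
Qed.

Lemma wprefers_by_index w a b :
  (h <= w) || (h <= a) && (h <= b) -> wprefers x w a b = (a < b).
Proof. rewrite wprefersE /wgroup; repeat case: ifP; lia. Qed.

Lemma wprefers_upper_over_low w a b : w < h -> a < h -> h <= b ->
  wprefers x w a b = [&& w < k, a < k & bitat x w a].
Proof. rewrite wprefersE /wgroup; repeat case: ifP; lia. Qed.

End WomanPreferences.

Lemma mu1_lt h (w : 'I_(h + h)) : mu1 w < h + h.
Proof. have := ltn_ord w; rewrite /mu1; case: ifP; lia. Qed.

Definition swap_halves h (w : 'I_(h + h)) : 'I_(h + h) := Ordinal (mu1_lt w).

Section SwapHalves.
Variable h : nat.
Implicit Types v w : 'I_(h + h).

Lemma swap_halvesK : involutive (@swap_halves h).
Proof.
move=> w; apply: val_inj; have := ltn_ord w.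
by rewrite /= /mu1 /= /mu1; case: (ltnP w h) => /= hw; case: ifP; lia.
Qed.

Lemma swap_halves_low w : (h <= swap_halves w) = (w < h).
Proof. have := ltn_ord w; rewrite /= /mu1; case: ifP; lia. Qed.

Lemma swap_halves_upper w : (swap_halves w < h) = (h <= w).
Proof. by rewrite ltnNge swap_halves_low -leqNgt. Qed.

Lemma swap_halves_mono v w : (h <= v) = (h <= w) ->
  (swap_halves v < swap_halves w) = (v < w).
Proof.
move=> same; rewrite /= /mu1; case: (ltnP v h) same => hv.
all: by case: (ltnP w h) => hw //= _; lia.
Qed.

End SwapHalves.

Definition low_half h : {set 'I_(h + h)} := [set rshift h i | i in 'I_h].

Lemma mem_low_half h (w : 'I_(h + h)) : (w \in low_half h) = (h <= w).
Proof.
apply/imsetP/idP => [[i _ ->] /=|w_low]; first exact: leq_addr.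
have lt_wh : w - h < h by have := ltn_ord w; lia.
by exists (Ordinal lt_wh); last by apply: val_inj => /=; lia.
Qed.

Lemma card_low_half h : #|low_half h| = h.
Proof. by rewrite card_imset ?card_ord //; exact: rshift_inj. Qed.

Lemma card_upper_half h : #|~: low_half h| = h.
Proof. have := cardsC (low_half h); rewrite card_ord card_low_half; lia. Qed.

Lemma inj_stay_compl (T : finType) (f : T -> T) (A : {set T}) a :
  injective f -> #|A| <= #|~: A| -> a \in A -> f a \in A ->
  exists2 b, b \notin A & f b \notin A.
Proof.
move=> injf leA Aa fAa.
case: (pickP [pred b | (b \notin A) && (f b \notin A)]) => [b /andP[] | noB].
  by exists b.
have sub : f @: (a |: ~: A) \subset A.
  apply/subsetP => _ /imsetP[b + ->] => /setU1P[-> // | nAb].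
  by rewrite in_setC in nAb; move: (noB b) => /=; rewrite nAb => /negbFE.
move: (subset_leq_card sub); rewrite card_imset // cardsU1 in_setC Aa /=; lia.
Qed.

Section StableMarriages.
Variables (k h : nat) (x y : 'I_k -> 'I_k -> bool).
Hypotheses (hk : k <= h) (hd : DISJ x y).
Implicit Types (v w : 'I_(h + h)) (mu : 'I_(h + h) -> 'I_(h + h)).

Lemma stable_swap_halves : stable x y (@swap_halves h).
Proof.
move=> w w'; rewrite mprefers_transpose.
have := swap_halves_low w; have := swap_halves_low w'.
case: (ltnP w h) => [w_up | w_low]; case: (ltnP w' h) => [w'_up | w'_low] => m_low mw_low.
- rewrite !wprefers_by_index ?m_low ?mw_low ?orbT //.
  by rewrite swap_halves_mono ?(leqNgt h) ?w_up ?w'_up //; lia.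
- rewrite !(wprefers_upper_over_low _ hk) ?swap_halves_upper ?m_low ?mw_low //.
  rewrite (bitat_transpose y) => /and4P[/and3P[_ _ bx] _ _ by_].
  by have := bitat_disj w (swap_halves w') hd; rewrite bx by_.
- rewrite wprefers_by_index ?w_low //; lia.
- rewrite !wprefers_by_index ?w_low ?w'_low ?orbT //.
  by rewrite swap_halves_mono ?w_low ?w'_low //; lia.
Qed.

Lemma stable_no_low_and_upper_couples mu w0 w2 : stable x y mu ->
  h <= w0 -> h <= mu w0 -> w2 < h -> mu w2 < h -> False.
Proof.
move=> st w0_low m0_low w2_up m2_up.
have w0_neq_w2 : w0 != w2 by apply/eqP => /(congr1 val) /=; lia.
have m0_neq_m2 : mu w0 != mu w2 by apply/eqP => /(congr1 val) /=; lia.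
have := st w0 w2; have := st w2 w0; rewrite !mprefers_transpose.
rewrite (wprefers_asym x w2 m0_neq_m2) (wprefers_upper_over_low _ hk) //.
rewrite (wprefers_by_index _ hk (w := mu w0)) ?m0_low //.
rewrite (wprefers_by_index _ hk (w := w0)) ?w0_low //.
rewrite (wprefers_asym _ (mu w2) w0_neq_w2) (wprefers_upper_over_low _ hk) //.
rewrite (bitat_transpose y); have := bitat_disj w2 (mu w2) hd.
by case: (bitat x _ _); case: (bitat y _ _); rewrite /= ?andbF ?andbT; lia.
Qed.

Lemma stable_swaps_halves mu : injective mu -> stable x y mu ->
  forall w, (h <= mu w) = (w < h).
Proof.
move=> inj_mu st.
have low_to_upper w : h <= w -> mu w < h.
  move=> w_low; rewrite ltnNge; apply/negP => m_low.
  have := @inj_stay_compl _ mu (low_half h) w inj_mu.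
  rewrite card_low_half card_upper_half !mem_low_half.
  case/(_ (leqnn h) w_low m_low) => w2; rewrite !mem_low_half -!ltnNge => w2_up m2_up.
  exact: (stable_no_low_and_upper_couples st w_low m_low w2_up m2_up).
move=> w; case: (ltnP w h) => [w_up | /low_to_upper m_up]; last by rewrite leqNgt m_up.
rewrite leqNgt; apply/negP => m_up.
have := @inj_stay_compl _ mu (~: low_half h) w inj_mu.
rewrite setCK card_upper_half card_low_half !in_setC !mem_low_half -!ltnNge.
case/(_ (leqnn h) w_up m_up) => w2; rewrite !in_setC !negbK !mem_low_half.
by move=> /low_to_upper m2_up; rewrite leqNgt m2_up.
Qed.

Lemma stable_step mu w : injective mu -> stable x y mu ->
  (forall v, v < w -> mu v = swap_halves v) -> mu w = swap_halves w.
Proof.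
move=> inj_mu st IH; apply/eqP/negPn/negP => neq.
have halves := stable_swaps_halves inj_mu st.
have [w' mu_w'] : exists w', mu w' = swap_halves w.
  by exists (invF inj_mu (swap_halves w)); rewrite f_invF.
have same_half : (w' < h) = (w < h) by rewrite -halves mu_w' swap_halves_low.
have lt_w_w' : w < w'.
  case: ltngtP => // [w'_lt | /val_inj eq_w]; last by rewrite -mu_w' -eq_w eqxx in neq.
  move: (IH _ w'_lt); rewrite mu_w' => /(can_inj (@swap_halvesK h)) eq_w.
  by rewrite eq_w ltnn in w'_lt.
have lt_m_muw : swap_halves w < mu w.
  case: ltngtP => // [muw_lt | /val_inj eq_m]; last by rewrite eq_m eqxx in neq.
  have v_lt : swap_halves (mu w) < w.
    rewrite -swap_halves_mono; last by rewrite swap_halves_low ltnNge halves -leqNgt.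
    by rewrite !swap_halvesK.
  have := IH _ v_lt; rewrite swap_halvesK => /inj_mu eq_v.
  by rewrite eq_v ltnn in v_lt.
(* Both [w] and the husband-to-be [swap_halves w] rank the opposite half by
   index, so [(w, swap_halves w)] is a blocking pair. *)
apply: (st w w'); rewrite mu_w' mprefers_transpose.
rewrite !wprefers_by_index ?lt_m_muw ?lt_w_w' //.
  by rewrite swap_halves_low [h <= w']leqNgt same_half; case: ltnP.
by rewrite swap_halves_low halves; case: ltnP.
Qed.

Lemma stable_eq_swap_halves mu : injective mu -> stable x y mu ->
  forall w, mu w = swap_halves w.
Proof.
move=> inj_mu st.
suff below n w : w < n -> mu w = swap_halves w by move=> w; apply: (below (h + h)).
elim: n w => [//|n IHn] w; rewrite ltnS leq_eqVlt => /orP[/eqP w_n | ]; last exact: IHn.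
by apply: stable_step => // v; rewrite w_n; apply: IHn.
Qed.

End StableMarriages.

Theorem lemma16 (h k : nat) (hk : k <= h) (kpos : 0 < h -> 0 < k)
    (x y : 'I_k -> 'I_k -> bool) (hdisj : DISJ x y) :
  forall mu : 'I_(h + h) -> 'I_(h + h), injective mu ->
    (@stable k h x y mu <-> (forall w, nat_of_ord (mu w) = mu1 w)).
Proof.
move=> mu inj_mu; split => [st w | mu_eq w w'].
  by rewrite (stable_eq_swap_halves hk hdisj inj_mu st).
have mu_swap v : mu v = swap_halves v by apply: val_inj; exact: mu_eq.
by rewrite !mu_swap; apply: (stable_swap_halves hk hdisj (w := w) (w' := w')).
Qed.
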